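(* In the large-election setting of the context, let $\rho=\frac{q-1/2}{1-q}$. If $v_\ell/v_w>\rho$, then there exists $N$ such that for all odd $n>N$ the $n$-voter collective choice problem is adversely correlated; otherwise (if $v_\ell/v_w\le\rho$), for every odd $n$ the $n$-voter collective choice problem is advantageously correlated.
   Context: Fix $q\in[1/2,1)$, $v_w,v_\ell>0$ with $v_\ell/v_w<q/(1-q)$, and $\lambda\in(0,1)$. For each odd $n\ge3$, the $n$-voter collective choice problem is: voters $1,\dots,n$ vote for $p^*$ or $p_*$; a policy wins iff it gets more than $\tau=(n-1)/2$ votes. Exactly $\lceil qn\rceil$ voters are winners, the set of winners being uniformly distributed among subsets of that size; a winner gets payoff $v_w$ higher from $p^*$ than from $p_*$, a loser gets payoff $v_\ell$ lower (so $V_i^d\in\{v_w,-v_\ell\}$). Independently, each voter with probability $\lambda$ privately learns whether she is a winner (good news, or bad news) and otherwise receives an uninformative signal $s^0$. Let $G,B$ be the numbers of voters with good and bad news and $V^G(\kappa)=E[V_i^d\mid G=\kappa,B=0,S_i=s^0]$. The problem is adversely correlated if $V^G(\kappa)<0$ for some $\kappa\in\{1,\dots,\tau\}$ and advantageously correlated otherwise. *)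

From HB Require Import structures.
From mathcomp Require Import all_boot all_order all_algebra.
Set Implicit Arguments. Unset Strict Implicit. Unset Printing Implicit Defensive.
Import Order.TTheory GRing.Theory Num.Theory.
Local Open Scope ring_scope.

Section Model.
Variable R : archiRealFieldType.
Variables (q vw vl lam : R).

Definition nwin (n : nat) : nat := `|Num.ceil (q * n%:R)|%N.

Definition tau (n : nat) : nat := (n.-1)./2.

(* An outcome: (S, I) = (set of winners, set of informed voters).
   S is uniform among subsets of size nwin n; each voter is informed
   independently with probability lam. *)
Definition prob (n : nat) (w : {set 'I_n} * {set 'I_n}) : R :=
  (if #|w.1| == nwin n then ('C(n, nwin n))%:R^-1 else 0)
  * lam ^+ #|w.2| * (1 - lam) ^+ (n - #|w.2|).

(* V_i^d : payoff difference of voter i between p^* and p_* *)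
Definition Vd (n : nat) (i : 'I_n) (w : {set 'I_n} * {set 'I_n}) : R :=
  if i \in w.1 then vw else - vl.

Definition Gnum (n : nat) (w : {set 'I_n} * {set 'I_n}) : nat := #|w.1 :&: w.2|.
Definition Bnum (n : nat) (w : {set 'I_n} * {set 'I_n}) : nat := #|w.2 :\: w.1|.

(* the conditioning event {G = k, B = 0, S_i = s^0} *)
Definition evG (n : nat) (i : 'I_n) (k : nat) (w : {set 'I_n} * {set 'I_n}) : bool :=
  [&& Gnum w == k, Bnum w == 0%N & i \notin w.2].

Definition VG (n : nat) (i : 'I_n) (k : nat) : R :=
  (\sum_(w | evG i k w) prob w * Vd i w) / (\sum_(w | evG i k w) prob w).

Definition adversely_correlated (n : nat) : Prop :=
  exists (i : 'I_n) (k : nat), [/\ (1 <= k)%N, (k <= tau n)%N & VG i k < 0].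

Definition advantageously_correlated (n : nat) : Prop :=
  ~ adversely_correlated n.
End Model.

From mathcomp Require Import all_boot all_order all_algebra.
From mathcomp Require Import ring lra zify.
Set Implicit Arguments.
Unset Strict Implicit.
Unset Printing Implicit Defensive.
Import Order.TTheory GRing.Theory Num.Theory.
Local Open Scope ring_scope.

(* Given the event {G = k, B = 0, S_i = s^0}, every informed voter is a winner,
   so voter i is a winner with odds C(n-1, W-1) C(W-1, k) : C(n-1, W) C(W, k),
   i.e. (n - W) : (W - k), where W = ceil(q n). Hence V^G(k) < 0 iff
   v_w (W - k) < v_l (n - W), and the problem is adversely correlated iff this
   holds at the largest admissible k = tau = (n - 1)/2. As q n <= W < q n + 1,
   both sides are v_w (q - 1/2) n + O(1) and v_l (1 - q) n + O(1): the strict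
   inequality holds for all large n when rho < v_l / v_w, and W >= q n rules it
   out for every n when v_l / v_w <= rho. *)

Lemma card_draws_notin (T : finType) (x : T) m :
  #|[set S : {set T} | x \notin S & #|S| == m]| = 'C(#|T|.-1, m).
Proof.
rewrite -(cardsC1 x) -cards_draws; apply: eq_card => S.
by rewrite !inE subsetC sub1set inE.
Qed.

Lemma card_draws_in (T : finType) (x : T) m :
  #|[set S : {set T} | x \in S & #|S| == m.+1]| = 'C(#|T|.-1, m).
Proof.
have := cardsID [set S : {set T} | x \in S] [set S : {set T} | #|S| == m.+1].
rewrite card_draws; set A := _ :&: _; set B := _ :\: _.
have -> : A = [set S : {set T} | x \in S & #|S| == m.+1].
  by apply/setP => S; rewrite !inE andbC.
have -> : B = [set S : {set T} | x \notin S & #|S| == m.+1].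
  by apply/setP => S; rewrite !inE andbC.
have /prednK <- : (0 < #|T|)%N by apply/card_gt0P; exists x.
by rewrite card_draws_notin binS /=; lia.
Qed.

Lemma mul_bin_bin_sub m V k :
  ('C(m, V) * 'C(V, k) * (m - V) = 'C(m, V.+1) * 'C(V.+1, k) * (V.+1 - k))%N.
Proof.
rewrite mulnAC (mulnC 'C(m, V)) -mul_bin_left.
by rewrite -[RHS]mulnA (mulnC 'C(V.+1, k)) -mul_bin_down /=; ring.
Qed.

Lemma rho_lt_ratio (F : realFieldType) (q vw vl : F) : 0 < vw -> q < 1 ->
  ((q - 1 / 2) / (1 - q) < vl / vw) = (vw * (q - 1 / 2) < vl * (1 - q)).
Proof.
move=> vw_gt0 q_lt1.
by rewrite ltr_pdivlMr // mulrAC ltr_pdivrMr ?subr_gt0 // mulrC.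
Qed.

Lemma adverse_gap_lt (F : realFieldType) (q vw vl x w : F) :
  0 < vw -> 0 < vl -> w < q * x + 1 ->
  3 / 2 * vw + vl < (vl * (1 - q) - vw * (q - 1 / 2)) * x ->
  vw * (w - (x - 1) / 2) < vl * (x - w).
Proof.
move=> vw_gt0 vl_gt0 w_lt large.
have : vw * w < vw * (q * x + 1) by rewrite ltr_pM2l.
have : vl * w < vl * (q * x + 1) by rewrite ltr_pM2l.
lra.
Qed.

Lemma adverse_gap_ge (F : realFieldType) (q vw vl x w : F) :
  0 <= vw -> 0 <= vl -> 0 <= x -> q * x <= w ->
  vl * (1 - q) <= vw * (q - 1 / 2) ->
  vl * (x - w) <= vw * (w - (x - 1) / 2).
Proof.
move=> vw_ge0 vl_ge0 x_ge0 w_ge small.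
have : vl * (q * x) <= vl * w by rewrite ler_wpM2l.
have : vw * (q * x) <= vw * w by rewrite ler_wpM2l.
have : vl * (1 - q) * x <= vw * (q - 1 / 2) * x by rewrite ler_wpM2r.
lra.
Qed.

Section Thresholds.
Variables (R : archiRealFieldType) (q : R) (n : nat).

Lemma natr_nwin : 0 <= q -> (nwin q n)%:R = (Num.ceil (q * n%:R))%:~R :> R.
Proof.
move=> q_ge0; rewrite /nwin natr_absz ger0_norm // ceil_ge0.
by apply: lt_le_trans (mulr_ge0 q_ge0 (ler0n _ n)); rewrite ltrN10.
Qed.

Lemma nwin_ge : 0 <= q -> q * n%:R <= (nwin q n)%:R.
Proof. by move=> q_ge0; rewrite natr_nwin // ceil_ge. Qed.

Lemma nwin_lt : 0 <= q -> (nwin q n)%:R < q * n%:R + 1.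
Proof.
move=> q_ge0; have := ceilB1_lt (q * n%:R).
by rewrite natr_nwin // intrB /= ltrBlDr.
Qed.

Lemma natr_tau : odd n -> (tau n)%:R = (n%:R - 1) / 2 :> R.
Proof.
case: n => [//|m] /= m_even; rewrite /tau /= -[m in RHS](odd_double_half m).
by rewrite (negbTE m_even) add0n -addn1 natrD -muln2 natrM; field.
Qed.

Lemma tau_lt_nwin : odd n -> 1 / 2 <= q -> (tau n < nwin q n)%N.
Proof.
move=> n_odd q_ge; rewrite -(ltr_nat R) natr_tau //.
apply: lt_le_trans (nwin_ge _); last lra.
by apply: lt_le_trans (ler_wpM2r (ler0n _ n) q_ge); lra.
Qed.

Lemma nwin_le : 0 <= q -> q <= 1 -> (nwin q n <= n)%N.
Proof.
move=> q_ge0 q_le1; rewrite -ltnS -(ltr_nat R) -addn1 natrD.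
by apply: lt_le_trans (nwin_lt q_ge0) _; rewrite lerD2r ler_piMl.
Qed.

End Thresholds.

Section ConditionalPayoff.
Variables (R : archiRealFieldType) (q vw vl lam : R) (n : nat) (i : 'I_n) (k : nat).
Local Notation W := (nwin q n).
Local Notation weight := (('C(n, W))%:R^-1 * lam ^+ k * (1 - lam) ^+ (n - k)).

Lemma evG_pairE (S I : {set 'I_n}) :
  evG i k (S, I) = (I \subset S :\ i) && (#|I| == k).
Proof.
rewrite /evG /Gnum /Bnum /= subsetD1 cards_eq0 setD_eq0.
by case: (boolP (I \subset S)) => [/setIidPr-> | _]; rewrite ?andbF // andbC.
Qed.

Lemma sum_evG_draws (f : bool -> R) :
  \sum_(w | evG i k w) prob q lam w * f (i \in w.1) =
  weight * \sum_(S : {set 'I_n} | #|S| == W) 'C(#|S :\ i|, k)%:R * f (i \in S).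
Proof.
transitivity (\sum_(S : {set 'I_n})
  \sum_(I : {set 'I_n} | (I \subset S :\ i) && (#|I| == k)) prob q lam (S, I) * f (i \in S)).
  by rewrite pair_big_dep; apply: eq_bigl => -[S I]; rewrite evG_pairE.
rewrite mulr_sumr [RHS]big_mkcond; apply: eq_bigr => S _.
case: (#|S| =P W) => [cardS | ncardS]; last first.
  by rewrite big1 // => I _; rewrite /prob /= (introF eqP ncardS) !mul0r.
rewrite (eq_bigr (fun _ => weight * f (i \in S))); last first.
  by move=> I /andP[_ /eqP cardI]; rewrite /prob /= cardS eqxx cardI.
rewrite sumr_const
  (eq_card (B := [set I : {set 'I_n} | I \subset S :\ i & #|I| == k])); last first.
  by move=> I; rewrite inE.
by rewrite cards_draws -mulrnAr [in RHS]mulr_natl.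
Qed.

Lemma sum_evG (f : bool -> R) : (0 < W)%N ->
  \sum_(w | evG i k w) prob q lam w * f (i \in w.1) =
  weight * (('C(n.-1, W.-1) * 'C(W.-1, k))%:R * f true +
            ('C(n.-1, W) * 'C(W, k))%:R * f false).
Proof.
move=> W_gt0; rewrite sum_evG_draws; congr (_ * _).
case: W W_gt0 => // V _ /=.
rewrite (bigID (fun S : {set 'I_n} => i \in S)) /=; congr (_ + _).
- rewrite (eq_bigr (fun _ => 'C(V, k)%:R * f true)); last first.
    move=> S /andP[/eqP cardS iS]; move: cardS.
    by rewrite (cardsD1 i S) iS add1n => -[->].
  rewrite sumr_const
    (eq_card (B := [set S : {set 'I_n} | i \in S & #|S| == V.+1])); last first.
    by move=> S; rewrite !inE andbC.
  by rewrite card_draws_in card_ord natrM -mulrA [in RHS]mulr_natl.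
- rewrite (eq_bigr (fun _ => 'C(V.+1, k)%:R * f false)); last first.
    move=> S /andP[/eqP cardS /negbTE iS]; move: cardS.
    by rewrite (cardsD1 i S) iS add0n => ->.
  rewrite sumr_const
    (eq_card (B := [set S : {set 'I_n} | i \notin S & #|S| == V.+1])); last first.
    by move=> S; rewrite !inE andbC.
  by rewrite card_draws_notin card_ord natrM -mulrA [in RHS]mulr_natl.
Qed.

Lemma VG_lt0 : 0 < lam -> lam < 1 -> (k < W)%N -> (W <= n)%N ->
  (VG q vw vl lam i k < 0) = (vw * (W - k)%:R < vl * (n - W)%:R).
Proof.
move=> lam_gt0 lam_lt1 k_lt_W W_le_n.
have W_gt0 : (0 < W)%N by apply: leq_ltn_trans k_lt_W.
set a := ('C(n.-1, W.-1) * 'C(W.-1, k))%N; set b := ('C(n.-1, W) * 'C(W, k))%N.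
have weight_gt0 : 0 < weight.
  by rewrite !mulr_gt0 ?exprn_gt0 ?subr_gt0 // invr_gt0 ltr0n bin_gt0.
have a_gt0 : (0 < a)%N by rewrite muln_gt0 !bin_gt0; lia.
have balance : (a * (n - W) = b * (W - k))%N.
  have := mul_bin_bin_sub n.-1 W.-1 k; rewrite prednK //.
  by have -> : (n.-1 - W.-1 = n - W)%N by lia.
rewrite /VG (sum_evG (fun b => if b then vw else - vl) W_gt0).
under eq_bigr do rewrite -[prob _ _ _]mulr1.
rewrite (sum_evG (fun=> 1) W_gt0) ltr_pdivrMr; last first.
  by rewrite mulr_gt0 // !mulr1 ltr_wpDr // ltr0n.
rewrite mul0r pmulr_rlt0 // mulrN subr_lt0.
rewrite -[in RHS](ltr_pM2l (_ : 0 < a%:R)) ?ltr0n // mulrA.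
have -> : a%:R * (vl * (n - W)%:R) = b%:R * vl * (W - k)%:R :> R.
  by rewrite mulrCA -natrM balance natrM; ring.
by rewrite ltr_pM2r // ltr0n subn_gt0.
Qed.

End ConditionalPayoff.

Section Correlation.
Variables (R : archiRealFieldType) (q vw vl lam : R).
Hypotheses (q_ge : 1 / 2 <= q) (q_lt1 : q < 1) (vw_gt0 : 0 < vw).
Hypotheses (lam_gt0 : 0 < lam) (lam_lt1 : lam < 1).

Lemma adversely_correlatedE n : odd n -> (3 <= n)%N ->
  adversely_correlated q vw vl lam n <->
  vw * ((nwin q n)%:R - (n%:R - 1) / 2) < vl * (n%:R - (nwin q n)%:R).
Proof.
move=> n_odd n_ge3.
have q_ge0 : 0 <= q by apply: le_trans q_ge; lra.
have tau_lt_W := tau_lt_nwin n_odd q_ge.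
have W_le_n := nwin_le n q_ge0 (ltW q_lt1).
rewrite -natr_tau // -!natrB ?(ltnW tau_lt_W) //; split.
- case=> i [k [_ k_le_tau]]; rewrite VG_lt0 //; last exact: leq_ltn_trans tau_lt_W.
  apply: le_lt_trans; rewrite ler_pM2l // ler_nat.
  exact: leq_sub2l.
- have n_gt0 : (0 < n)%N by apply: leq_trans n_ge3.
  exists (Ordinal n_gt0), (tau n); split => //; last by rewrite VG_lt0.
  by rewrite /tau; lia.
Qed.

End Correlation.

Theorem proposition4 (R : archiRealFieldType) (q vw vl lam : R) :
  1 / 2 <= q -> q < 1 -> 0 < vw -> 0 < vl -> vl / vw < q / (1 - q) ->
  0 < lam -> lam < 1 ->
  let rho := (q - 1 / 2) / (1 - q) in
  (rho < vl / vw ->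
     exists N : nat, forall n : nat, odd n -> (3 <= n)%N -> (N < n)%N ->
       adversely_correlated q vw vl lam n) /\
  (vl / vw <= rho ->
     forall n : nat, odd n -> (3 <= n)%N ->
       advantageously_correlated q vw vl lam n).
Proof.
move=> q_ge q_lt1 vw_gt0 vl_gt0 _ lam_gt0 lam_lt1 rho.
have q_ge0 : 0 <= q by apply: le_trans q_ge; lra.
have correlatedE := adversely_correlatedE vl q_ge q_lt1 vw_gt0 lam_gt0 lam_lt1.
split.
- rewrite rho_lt_ratio // -subr_gt0 => gap_gt0.
  pose x := (3 / 2 * vw + vl) / (vl * (1 - q) - vw * (q - 1 / 2)).
  have x_ge0 : 0 <= x by rewrite divr_ge0 // ?ltW //; lra.
  exists (Num.bound x) => n n_odd n_ge3 n_large; apply/(correlatedE _ n_odd n_ge3).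
  apply: adverse_gap_lt (nwin_lt n q_ge0) _ => //.
  rewrite [X in _ < X]mulrC -ltr_pdivrMr //; apply: lt_trans (archi_boundP x_ge0) _.
  by rewrite ltr_nat.
- rewrite leNgt rho_lt_ratio // -leNgt => gap_le0 n n_odd n_ge3.
  move=> /(correlatedE _ n_odd n_ge3); apply/negP; rewrite -leNgt.
  exact: adverse_gap_ge (ltW vw_gt0) (ltW vl_gt0) (ler0n _ n) (nwin_ge n q_ge0) gap_le0.
Qed.
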